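(* Let $W$ be a polynomial, $\sigma>0$, and suppose $s$ with $\Re s<0$ is a quasinormal frequency in the sense of Leaver with $\sigma<(\Re\sqrt s)^2$, with corresponding nonzero solution $u(x)=\sum_{k\ge1}H_k(1-x)^k$. Then $u\in X^\sigma$. Consequently, if in addition $s\in\Omega_\sigma$, then $u$ is a nonzero element of $\mathcal D^\sigma$ with $\mathcal L_su=0$, i.e. $s$ is a quasinormal frequency in the sense that $\mathcal L_s:\mathcal D^\sigma\to Y^\sigma$ has nontrivial kernel.
   Context: For $|\arg z|<\pi$, $\sqrt z$ denotes the branch with $\Re\sqrt z>0$. $\mathcal L_su=\frac{d}{dx}(x^2\frac{du}{dx})+s\frac{du}{dx}-Wu$ on $I=(0,1)$. $s$ with $\Re s<0$ is a quasinormal frequency in the sense of Leaver if there is a solution $u$ of $\mathcal L_su=0$ of the form $u(x)=\sum_{k=1}^\infty H_k(1-x)^k$ with $\sup_k|H_ke^{2\sqrt{sk}}|<\infty$. For $\sigma>0$, $u\in C^\infty(\overline I)$, $k\in\{0,1,2\}$: $|u|^{0}_{\sigma,k,0}=\big(\sum_{n=0}^\infty\frac{\sigma^{2n}}{n!^2(n+1)!^2}n^{k}\int_0^1(x/\sigma)^k|\partial_x^nu|^2dx\big)^{1/2}$ (with $0^0:=1$), $\|u\|_{\sigma,0,0}=|u|^0_{\sigma,0,0}$, $[u]^0_\sigma=(\sum_{n=0}^\infty\frac{\sigma^{2n+1}}{n!^2(n+1)!^2}|u^{(n)}(0)|^2)^{1/2}$. $X^\sigma=\{u\in C^\infty(\overline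 I):u(1)=0,\ \|\partial_xu\|_{\sigma,0,0}+|\partial_xu|^0_{\sigma,1,0}+|\partial_xu|^0_{\sigma,2,0}+[\partial_xu]^0_\sigma<\infty\}$, $Y^\sigma=\{u\in C^\infty(\overline I):\|u\|_{\sigma,0,0}+|u|^0_{\sigma,1,0}+[u]^0_\sigma<\infty\}$, $\mathcal D^\sigma=\{u\in X^\sigma:\mathcal L_su\in Y^\sigma\}$. $\Omega^1_\sigma=\{s:\Re s\le0,\ \sigma<|\Im s|\}\cup\{s:\Re s>0,\ \sigma<|s|\}$; $\Omega^2_\sigma=\{s:\ \sigma<|s|+\Re s,\ \sigma>\frac{-\Re(s)|s|}{2(|s|+\Re s)}\}$; $\Omega^3_\sigma=\{s\neq0:\ \sigma(|s|-\sigma+\Re s)-(\sigma(1+\frac{\Re s}{|s|})+\frac12\Re s)^2>0\}$; $\Omega_\sigma=\Omega^1_\sigma\cap(\Omega^2_\sigma\cup\Omega^3_\sigma)$. *)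

From Stdlib Require Import Reals Lra List Arith Factorial.
Open Scope R_scope.

Definition Cpx : Type := (R * R)%type.
Definition Re (z : Cpx) : R := fst z.
Definition Im (z : Cpx) : R := snd z.
Definition C0 : Cpx := (0, 0).
Definition RtoC (x : R) : Cpx := (x, 0).
Definition Cadd (z w : Cpx) : Cpx := (Re z + Re w, Im z + Im w).
Definition Csub (z w : Cpx) : Cpx := (Re z - Re w, Im z - Im w).
Definition Cmul (z w : Cpx) : Cpx :=
  (Re z * Re w - Im z * Im w, Re z * Im w + Im z * Re w).
Definition Cnorm2 (z : Cpx) : R := Re z ^ 2 + Im z ^ 2.
Definition Cnorm (z : Cpx) : R := sqrt (Cnorm2 z).
Definition Cexp (z : Cpx) : Cpx := (exp (Re z) * cos (Im z), exp (Re z) * sin (Im z)).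
(** Principal square root: for |arg z| < pi, the branch with positive real part. *)
Definition Csqrt (z : Cpx) : Cpx :=
  (sqrt ((Cnorm z + Re z) / 2),
   (if Rlt_dec (Im z) 0 then -1 else 1) * sqrt ((Cnorm z - Re z) / 2)).

Fixpoint Peval (W : list Cpx) (x : R) : Cpx :=
  match W with
  | nil => C0
  | a :: W' => Cadd a (Cmul (RtoC x) (Peval W' x))
  end.

Definition Cseries (a : nat -> Cpx) (l : Cpx) : Prop :=
  infinite_sum (fun k => Re (a k)) (Re l) /\ infinite_sum (fun k => Im (a k)) (Im l).

Definition is_deriv01 (f : R -> Cpx) (x : R) (l : Cpx) : Prop :=
  forall eps, 0 < eps -> exists delta, 0 < delta /\
    forall h, h <> 0 -> 0 <= x + h <= 1 -> Rabs h < delta ->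
      Cnorm (Csub ((/ h) * Re (Csub (f (x + h)) (f x)),
                   (/ h) * Im (Csub (f (x + h)) (f x))) l) < eps.

(** [D] is the tower of derivatives of [u] on the closed interval [0,1]:
    D 0 = u and D (n+1) = (D n)' on [0,1].  Existence of such a tower is
    u \in Cpx^\infty(\bar I). *)
Definition smooth_tower (u : R -> Cpx) (D : nat -> R -> Cpx) : Prop :=
  (forall x, 0 <= x <= 1 -> D O x = u x) /\
  (forall n x, 0 <= x <= 1 -> is_deriv01 (D n) x (D (S n) x)).

Definition Cinf01 (u : R -> Cpx) : Prop := exists D, smooth_tower u D.

Definition int01 (g : R -> R) (v : R) : Prop :=
  exists pr : Riemann_integrable g 0 1, RiemannInt pr = v.

Definition wcoef (sigma : R) (n : nat) : R :=
  sigma ^ (2 * n) / ((INR (fact n)) ^ 2 * (INR (fact (S n))) ^ 2).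

Definition seminorm_finite (sigma : R) (k : nat) (D : nat -> R -> Cpx) : Prop :=
  exists (I : nat -> R) (M : R),
    (forall n, int01 (fun x => (x / sigma) ^ k * Cnorm2 (D n x)) (I n)) /\
    (forall N, sum_f_R0 (fun n => wcoef sigma n * INR n ^ k * I n) N <= M).

Definition bdry_finite (sigma : R) (D : nat -> R -> Cpx) : Prop :=
  exists M : R,
    forall N, sum_f_R0 (fun n => wcoef sigma n * sigma * Cnorm2 (D n 0)) N <= M.

(** u \in X^sigma, witnessed by its derivative tower D (so that D (S n) is the
    tower of \partial_x u). *)
Definition InX_tower (sigma : R) (u : R -> Cpx) (D : nat -> R -> Cpx) : Prop :=
  smooth_tower u D /\ u 1 = C0 /\
  seminorm_finite sigma 0 (fun n => D (S n)) /\
  seminorm_finite sigma 1 (fun n => D (S n)) /\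
  seminorm_finite sigma 2 (fun n => D (S n)) /\
  bdry_finite sigma (fun n => D (S n)).

Definition InX (sigma : R) (u : R -> Cpx) : Prop := exists D, InX_tower sigma u D.

Definition InY (sigma : R) (v : R -> Cpx) : Prop :=
  exists D, smooth_tower v D /\
    seminorm_finite sigma 0 D /\ seminorm_finite sigma 1 D /\ bdry_finite sigma D.

(** L_s u = (x^2 u')' + s u' - W u = x^2 u'' + (2x + s) u' - W u,
    computed from a derivative tower D of u. *)
Definition Lop (s : Cpx) (W : list Cpx) (D : nat -> R -> Cpx) (x : R) : Cpx :=
  Csub (Cadd (Cmul (RtoC (x ^ 2)) (D 2%nat x))
             (Cmul (Cadd (RtoC (2 * x)) s) (D 1%nat x)))
       (Cmul (Peval W x) (D O x)).

Definition solves_ODE (s : Cpx) (W : list Cpx) (u : R -> Cpx) : Prop :=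
  exists u1 u2 : R -> Cpx, forall x, 0 < x < 1 ->
    is_deriv01 u x (u1 x) /\ is_deriv01 u1 x (u2 x) /\
    Csub (Cadd (Cmul (RtoC (x ^ 2)) (u2 x)) (Cmul (Cadd (RtoC (2 * x)) s) (u1 x)))
         (Cmul (Peval W x) (u x)) = C0.

(** s (Re s < 0) is a quasinormal frequency in the sense of Leaver, with solution
    u(x) = sum_{k>=1} H_k (1-x)^k  (H 0 is unused), sup_k |H_k e^{2 sqrt(s k)}| < oo. *)
Definition Leaver_qnf (s : Cpx) (W : list Cpx) (u : R -> Cpx) (H : nat -> Cpx) : Prop :=
  Re s < 0 /\ Im s <> 0 /\
  solves_ODE s W u /\
  (forall x, 0 <= x <= 1 ->
     Cseries (fun k => Cmul (H (S k)) (RtoC ((1 - x) ^ (S k)))) (u x)) /\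
  (exists M, forall k, (1 <= k)%nat ->
     Cnorm (Cmul (H k) (Cexp (Cmul (RtoC 2) (Csqrt (Cmul s (RtoC (INR k))))))) <= M).

Definition Omega1 (sigma : R) (s : Cpx) : Prop :=
  (Re s <= 0 /\ sigma < Rabs (Im s)) \/ (0 < Re s /\ sigma < Cnorm s).
Definition Omega2 (sigma : R) (s : Cpx) : Prop :=
  sigma < Cnorm s + Re s /\
  sigma > - Re s * Cnorm s / (2 * (Cnorm s + Re s)).
Definition Omega3 (sigma : R) (s : Cpx) : Prop :=
  s <> C0 /\
  sigma * (Cnorm s - sigma + Re s) - (sigma * (1 + Re s / Cnorm s) + / 2 * Re s) ^ 2 > 0.
Definition Omega (sigma : R) (s : Cpx) : Prop :=
  Omega1 sigma s /\ (Omega2 sigma s \/ Omega3 sigma s).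

(* With al = Re (sqrt s), Leaver's bound
   |H_k| <= M exp(-2 al sqrt k) gives, for every splitting 2 al = ep + ga with ep, ga > 0,
   the moment bounds sum_k |H_k| k^m <= G (2m)! / ga^(2m).  Hence the series can be
   differentiated termwise on [0,1] arbitrarily often, and |u^(n)| <= 2 G (2n)! / ga^(2n).
   In the weighted sums defining X^sigma the n-th term is then O(n^(j+2) (16 sigma^2 / ga^4)^n),
   which is summable when ga^2 > 4 sigma; ga = al + sqrt sigma achieves this exactly when
   sigma < al^2.  The equation L_s u = 0, assumed on (0,1), extends to [0,1] by continuity,
   so L_s u lies in Y^sigma trivially. *)

From Stdlib Require Import Reals Lra Lia Factorial ZArith FunctionalExtensionality.
From Coquelicot Require Import Coquelicot.
Open Scope R_scope.

(** * Derivatives of (1 - x)^k *)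

Fixpoint ffact (k n : nat) : R :=
  match n with O => 1 | S n' => ffact k n' * INR (k - n') end.

(* The [n]-th derivative of [x |-> (1 - x) ^ k]; the truncated [k - n] is harmless
   because [ffact k n = 0] as soon as [n > k]. *)
Definition pow1m_deriv (n k : nat) (x : R) : R := (-1) ^ n * ffact k n * (1 - x) ^ (k - n).

Lemma ffact_bounds k n : 0 <= ffact k n <= INR k ^ n.
Proof.
  induction n as [|n IH]; simpl; [lra|].
  assert (0 <= INR (k - n) <= INR k) by (split; [apply pos_INR | apply le_INR; lia]).
  split; [apply Rmult_le_pos; lra|].
  rewrite Rmult_comm; apply Rmult_le_compat; lra.
Qed.

Lemma pow_unit_interval y m : 0 <= y <= 1 -> 0 <= y ^ m <= 1.
Proof.
  intros Hy; split; [now apply pow_le|].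
  rewrite <- (pow1 m); apply pow_incr; lra.
Qed.

Lemma pow_taylor_remainder y y' m : 0 <= y <= 1 -> 0 <= y' <= 1 ->
  Rabs (y' ^ m - y ^ m - INR m * y ^ pred m * (y' - y)) <= INR m ^ 2 * (y' - y) ^ 2.
Proof.
  intros Hy Hy'. set (d := y' - y).
  assert (Hd : 0 <= d ^ 2) by apply pow2_ge_0.
  induction m as [|[|m] IH].
  - replace (y' ^ 0 - y ^ 0 - INR 0 * y ^ pred 0 * d) with 0 by (simpl; ring).
    rewrite Rabs_R0; simpl; lra.
  - replace (y' ^ 1 - y ^ 1 - INR 1 * y ^ pred 1 * d) with 0 by (unfold d; simpl; ring).
    rewrite Rabs_R0; simpl; lra.
  -     replace (y' ^ S (S m) - y ^ S (S m) - INR (S (S m)) * y ^ pred (S (S m)) * d)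
      with (y' * (y' ^ S m - y ^ S m - INR (S m) * y ^ pred (S m) * d) + INR (S m) * y ^ m * d ^ 2)
      by (simpl pred; rewrite !S_INR; unfold d; simpl; ring).
    pose proof (pow_unit_interval y m Hy). pose proof (pos_INR (S m)).
    eapply Rle_trans; [apply Rabs_triang|].
    rewrite Rabs_mult, (Rabs_pos_eq y') by lra.
    rewrite (Rabs_pos_eq (INR (S m) * y ^ m * d ^ 2))
      by (apply Rmult_le_pos; [apply Rmult_le_pos|]; lra).
    set (r := y' ^ S m - y ^ S m - INR (S m) * y ^ pred (S m) * d) in *.
    pose proof (Rabs_pos r).
    assert (y' * Rabs r <= INR (S m) ^ 2 * d ^ 2) by nra.
    assert (INR (S m) * y ^ m * d ^ 2 <= INR (S m) * d ^ 2).
    { apply Rmult_le_compat_r; [lra|].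
      rewrite <- (Rmult_1_r (INR (S m))) at 2. apply Rmult_le_compat_l; lra. }
    rewrite (S_INR (S m)). nra.
Qed.

Lemma pow1m_deriv_bound n k x : 0 <= x <= 1 -> Rabs (pow1m_deriv n k x) <= INR k ^ n.
Proof.
  intros Hx. unfold pow1m_deriv. rewrite !Rabs_mult, pow_1_abs, Rmult_1_l.
  pose proof (ffact_bounds k n). pose proof (pow_unit_interval (1 - x) (k - n) ltac:(lra)).
  rewrite !Rabs_pos_eq by lra.
  rewrite <- (Rmult_1_r (INR k ^ n)). apply Rmult_le_compat; lra.
Qed.

Lemma pow1m_deriv_taylor n k x z : 0 <= x <= 1 -> 0 <= z <= 1 ->
  Rabs (pow1m_deriv n k z - pow1m_deriv n k x - (z - x) * pow1m_deriv (S n) k x)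
    <= (z - x) ^ 2 * INR k ^ S (S n).
Proof.
  intros Hx Hz. unfold pow1m_deriv.
  replace (k - S n)%nat with (pred (k - n)) by lia. simpl ffact.
  replace ((-1) ^ n * ffact k n * (1 - z) ^ (k - n) - (-1) ^ n * ffact k n * (1 - x) ^ (k - n) -
     (z - x) * ((-1) ^ S n * (ffact k n * INR (k - n)) * (1 - x) ^ pred (k - n)))
   with ((-1) ^ n * ffact k n * ((1 - z) ^ (k - n) - (1 - x) ^ (k - n)
          - INR (k - n) * (1 - x) ^ pred (k - n) * ((1 - z) - (1 - x)))) by (simpl; ring).
  rewrite !Rabs_mult, pow_1_abs, Rmult_1_l.
  pose proof (ffact_bounds k n). rewrite (Rabs_pos_eq (ffact k n)) by lra.
  pose proof (pow_taylor_remainder (1 - x) (1 - z) (k - n) ltac:(lra) ltac:(lra)) as Hrem.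
  replace ((1 - z - (1 - x)) ^ 2) with ((z - x) ^ 2) in Hrem by ring.
  assert (INR (k - n) ^ 2 <= INR k ^ 2) by (apply pow_incr; split; [apply pos_INR | apply le_INR; lia]).
  replace ((z - x) ^ 2 * INR k ^ S (S n)) with (INR k ^ n * (INR k ^ 2 * (z - x) ^ 2)) by (simpl; ring).
  apply Rmult_le_compat; [lra | apply Rabs_pos | lra |].
  eapply Rle_trans; [exact Hrem|]. apply Rmult_le_compat_r; [apply pow2_ge_0 | lra].
Qed.

(** * Power series in (1 - x) with finite moments *)

Lemma ex_series_Rabs_le (a b : nat -> R) :
  (forall k, Rabs (a k) <= b k) -> ex_series b -> ex_series a.
Proof.
  intros Hab Hb. apply ex_series_Rabs.
  apply (@ex_series_le R_AbsRing R_CompleteNormedModule _ b); [|exact Hb].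
  intros k. apply (Rle_trans _ (Rabs (a k))); [right; apply Rabs_Rabsolu | apply Hab].
Qed.

Lemma Rabs_Series_le (a b : nat -> R) :
  (forall k, Rabs (a k) <= b k) -> ex_series b -> Rabs (Series a) <= Series b.
Proof.
  intros Hab Hb. eapply Rle_trans; [apply Series_Rabs|].
  - apply (ex_series_Rabs_le _ b); [intros k; rewrite Rabs_Rabsolu; apply Hab | exact Hb].
  - apply Series_le; [|exact Hb]. intros k; split; [apply Rabs_pos | apply Hab].
Qed.

Definition moments_finite (c : nat -> R) : Prop :=
  forall m, ex_series (fun k => Rabs (c k) * INR k ^ m).

Definition moment (c : nat -> R) (m : nat) : R := Series (fun k => Rabs (c k) * INR k ^ m).

Definition dseries (c : nat -> R) (n : nat) (x : R) : R :=
  Series (fun k => c k * pow1m_deriv n k x).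

Section MomentsFinite.

Variable c : nat -> R.
Hypothesis Hc : moments_finite c.

Lemma moment_nonneg m : 0 <= moment c m.
Proof.
  apply (Rle_trans _ (Rabs (moment c m))); [apply Rabs_pos|].
  apply Rabs_Series_le; [|apply Hc]. intros k. rewrite Rabs_pos_eq; [lra|].
  apply Rmult_le_pos; [apply Rabs_pos | apply pow_le, pos_INR].
Qed.

Lemma dseries_term_bound n x k : 0 <= x <= 1 ->
  Rabs (c k * pow1m_deriv n k x) <= Rabs (c k) * INR k ^ n.
Proof.
  intros Hx. rewrite Rabs_mult.
  apply Rmult_le_compat_l; [apply Rabs_pos | now apply pow1m_deriv_bound].
Qed.

Lemma ex_series_dseries n x : 0 <= x <= 1 -> ex_series (fun k => c k * pow1m_deriv n k x).
Proof. intros Hx. apply (ex_series_Rabs_le _ _ (fun k => dseries_term_bound n x k Hx)), Hc. Qed.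

Lemma dseries_bound n x : 0 <= x <= 1 -> Rabs (dseries c n x) <= moment c n.
Proof.
  intros Hx. apply Rabs_Series_le; [|apply Hc]. intros k. now apply dseries_term_bound.
Qed.

Lemma dseries_taylor n x z : 0 <= x <= 1 -> 0 <= z <= 1 ->
  Rabs (dseries c n z - dseries c n x - (z - x) * dseries c (S n) x)
    <= (z - x) ^ 2 * moment c (S (S n)).
Proof.
  intros Hx Hz. unfold dseries, moment.
  rewrite <- Series_scal_l, <- Series_minus, <- Series_minus, <- Series_scal_l.
  - apply Rabs_Series_le; [|exact (ex_series_scal_l ((z - x) ^ 2) _ (Hc _))].
    intros k. replace (c k * pow1m_deriv n k z - c k * pow1m_deriv n k x
                       - (z - x) * (c k * pow1m_deriv (S n) k x))
      with (c k * (pow1m_deriv n k z - pow1m_deriv n k x - (z - x) * pow1m_deriv (S n) k x)) by ring.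
    rewrite Rabs_mult.
    replace ((z - x) ^ 2 * (Rabs (c k) * INR k ^ S (S n)))
      with (Rabs (c k) * ((z - x) ^ 2 * INR k ^ S (S n))) by ring.
    apply Rmult_le_compat_l; [apply Rabs_pos | now apply pow1m_deriv_taylor].
  - apply (ex_series_minus (V := R_NormedModule)); now apply ex_series_dseries.
  - exact (ex_series_scal_l (z - x) _ (ex_series_dseries (S n) x Hx)).
  - now apply ex_series_dseries.
  - now apply ex_series_dseries.
Qed.

Lemma dseries_diff_quotient n x h : h <> 0 -> 0 <= x <= 1 -> 0 <= x + h <= 1 ->
  Rabs (/ h * (dseries c n (x + h) - dseries c n x) - dseries c (S n) x)
    <= Rabs h * moment c (S (S n)).
Proof.
  intros Hh Hx Hxh. pose proof (dseries_taylor n x (x + h) Hx Hxh) as Ht.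
  replace (x + h - x) with h in Ht by ring.
  replace (/ h * (dseries c n (x + h) - dseries c n x) - dseries c (S n) x)
    with (/ h * (dseries c n (x + h) - dseries c n x - h * dseries c (S n) x)) by (field; auto).
  rewrite Rabs_mult, Rabs_inv.
  apply (Rmult_le_reg_l (Rabs h)); [now apply Rabs_pos_lt|].
  rewrite <- Rmult_assoc, Rinv_r, Rmult_1_l by now apply Rabs_no_R0.
  rewrite <- Rmult_assoc, <- Rabs_mult, (Rabs_pos_eq (h * h)) by nra.
  replace (h * h) with (h ^ 2) by ring. exact Ht.
Qed.

Lemma dseries_lipschitz n x y : 0 <= x <= 1 -> 0 <= y <= 1 ->
  Rabs (dseries c n y - dseries c n x)
    <= (moment c (S n) + moment c (S (S n))) * Rabs (y - x).
Proof.
  intros Hx Hy.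
  pose proof (dseries_taylor n x y Hx Hy) as Ht.
  pose proof (dseries_bound (S n) x Hx).
  pose proof (moment_nonneg (S (S n))).
  assert (Hd : Rabs (y - x) <= 1) by (apply Rabs_le; lra).
  assert (Hd2 : (y - x) ^ 2 <= Rabs (y - x)).
  { rewrite <- pow2_abs. pose proof (Rabs_pos (y - x)).
    replace (Rabs (y - x) ^ 2) with (Rabs (y - x) * Rabs (y - x)) by ring.
    rewrite <- (Rmult_1_r (Rabs (y - x))) at 3. apply Rmult_le_compat_l; lra. }
  replace (dseries c n y - dseries c n x)
    with ((dseries c n y - dseries c n x - (y - x) * dseries c (S n) x) + (y - x) * dseries c (S n) x)
    by ring.
  eapply Rle_trans; [apply Rabs_triang|]. rewrite Rabs_mult.
  pose proof (Rabs_pos (y - x)).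
  assert (Rabs (y - x) * Rabs (dseries c (S n) x) <= Rabs (y - x) * moment c (S n))
    by (apply Rmult_le_compat_l; auto).
  assert ((y - x) ^ 2 * moment c (S (S n)) <= Rabs (y - x) * moment c (S (S n)))
    by (apply Rmult_le_compat_r; auto).
  nra.
Qed.

End MomentsFinite.

Lemma dseries0_eq (c : nat -> R) (l x : R) : c O = 0 ->
  infinite_sum (fun j => c (S j) * (1 - x) ^ S j) l -> dseries c 0 x = l.
Proof.
  intros Hc0 Hs. unfold dseries. apply is_series_unique, is_series_decr_1.
  match goal with |- is_series _ ?L => replace L with l end.
  2: { rewrite Hc0. change (l = l + - (0 * pow1m_deriv 0 0 x)). ring. }
  apply (is_series_ext (fun j => c (S j) * (1 - x) ^ S j)); [|apply is_series_Reals; exact Hs].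
  intros j. unfold pow1m_deriv. rewrite Nat.sub_0_r. simpl. ring.
Qed.

Lemma Cnorm2_nonneg z : 0 <= Cnorm2 z.
Proof. unfold Cnorm2. pose proof (pow2_ge_0 (Re z)). pose proof (pow2_ge_0 (Im z)). lra. Qed.

Lemma Cnorm_le_Rabs_add z : Cnorm z <= Rabs (Re z) + Rabs (Im z).
Proof.
  unfold Cnorm, Cnorm2. pose proof (Rabs_pos (Re z)). pose proof (Rabs_pos (Im z)).
  rewrite <- (sqrt_pow2 (Rabs (Re z) + Rabs (Im z))) by lra. apply sqrt_le_1_alt.
  rewrite <- (pow2_abs (Re z)), <- (pow2_abs (Im z)). nra.
Qed.

Lemma Rabs_Re_le_Cnorm z : Rabs (Re z) <= Cnorm z.
Proof.
  unfold Cnorm, Cnorm2. rewrite <- (sqrt_pow2 (Rabs (Re z))) by apply Rabs_pos.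
  apply sqrt_le_1_alt. rewrite pow2_abs. pose proof (pow2_ge_0 (Im z)). lra.
Qed.

Lemma Rabs_Im_le_Cnorm z : Rabs (Im z) <= Cnorm z.
Proof.
  unfold Cnorm, Cnorm2. rewrite <- (sqrt_pow2 (Rabs (Im z))) by apply Rabs_pos.
  apply sqrt_le_1_alt. rewrite pow2_abs. pose proof (pow2_ge_0 (Re z)). lra.
Qed.

Lemma Cnorm_Cmul z w : Cnorm (Cmul z w) = Cnorm z * Cnorm w.
Proof.
  unfold Cnorm. rewrite <- sqrt_mult by apply Cnorm2_nonneg. f_equal.
  unfold Cnorm2, Cmul, Re, Im; simpl. ring.
Qed.

Lemma Cnorm_Cexp z : Cnorm (Cexp z) = exp (Re z).
Proof.
  unfold Cnorm, Cnorm2, Cexp, Re, Im; simpl.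
  replace ((exp (fst z) * cos (snd z)) * ((exp (fst z) * cos (snd z)) * 1)
           + (exp (fst z) * sin (snd z)) * ((exp (fst z) * sin (snd z)) * 1))
    with (exp (fst z) ^ 2 * (Rsqr (sin (snd z)) + Rsqr (cos (snd z)))) by (unfold Rsqr; ring).
  rewrite sin2_cos2, Rmult_1_r. apply sqrt_pow2. left; apply exp_pos.
Qed.

Lemma Cnorm_RtoC t : 0 <= t -> Cnorm (RtoC t) = t.
Proof.
  intros Ht. unfold Cnorm, Cnorm2, RtoC, Re, Im; simpl.
  replace (t * (t * 1) + 0 * (0 * 1)) with (t ^ 2) by ring. now apply sqrt_pow2.
Qed.

Lemma Re_Csqrt_scale s (t : R) : 0 <= t -> Re (Csqrt (Cmul s (RtoC t))) = sqrt t * Re (Csqrt s).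
Proof.
  intros Ht. unfold Csqrt, Re at 1; simpl.
  rewrite Cnorm_Cmul, Cnorm_RtoC by exact Ht.
  unfold Cmul, RtoC, Re, Im; simpl.
  rewrite <- sqrt_mult_alt by exact Ht. f_equal. field.
Qed.

Lemma Re_Csqrt_nonneg z : 0 <= Re (Csqrt z).
Proof. apply sqrt_pos. Qed.

Definition clamp01 (x : R) : R := Rmax 0 (Rmin 1 x).

Lemma clamp01_id x : 0 <= x <= 1 -> clamp01 x = x.
Proof. intros. unfold clamp01, Rmax, Rmin. repeat destruct Rle_dec; lra. Qed.

Lemma clamp01_range x : 0 <= clamp01 x <= 1.
Proof. unfold clamp01, Rmax, Rmin. repeat destruct Rle_dec; lra. Qed.

Lemma clamp01_lipschitz x y : Rabs (clamp01 y - clamp01 x) <= Rabs (y - x).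
Proof. unfold clamp01, Rmax, Rmin, Rabs. repeat destruct Rle_dec; repeat destruct Rcase_abs; lra. Qed.

Lemma continuity_pt_lipschitz f L x0 : 0 <= L ->
  (forall x y, Rabs (f y - f x) <= L * Rabs (y - x)) -> continuity_pt f x0.
Proof.
  intros HL Hf eps Heps. exists (eps / (L + 1)). split; [apply Rdiv_lt_0_compat; lra|].
  intros x [_ Hx]. simpl in *. unfold R_dist in *.
  eapply Rle_lt_trans; [apply Hf|].
  apply Rle_lt_trans with ((L + 1) * Rabs (x - x0)); [apply Rmult_le_compat_r; [apply Rabs_pos | lra]|].
  apply (Rmult_lt_compat_l (L + 1)) in Hx; [|lra].
  replace ((L + 1) * (eps / (L + 1))) with eps in Hx by (field; lra). exact Hx.
Qed.

(* Clamping extends each derivative to a Lipschitz function on all of R, so the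
   two-sided [continuity_pt] also holds at the endpoints 0 and 1. *)
Definition dseries01 (c : nat -> R) (n : nat) (x : R) : R := dseries c n (clamp01 x).

Definition series_tower (cr ci : nat -> R) (n : nat) (x : R) : Cpx :=
  (dseries01 cr n x, dseries01 ci n x).

Lemma dseries01_continuous c n x : moments_finite c -> continuity_pt (dseries01 c n) x.
Proof.
  intros Hc. pose proof (moment_nonneg c Hc (S n)). pose proof (moment_nonneg c Hc (S (S n))).
  apply (continuity_pt_lipschitz _ (moment c (S n) + moment c (S (S n)))); [lra|].
  intros y z. unfold dseries01. eapply Rle_trans.
  - apply dseries_lipschitz; [exact Hc | apply clamp01_range | apply clamp01_range].
  - apply Rmult_le_compat_l; [lra | apply clamp01_lipschitz].
Qed.

Lemma series_tower_deriv cr ci n x : moments_finite cr -> moments_finite ci -> 0 <= x <= 1 ->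
  is_deriv01 (series_tower cr ci n) x (series_tower cr ci (S n) x).
Proof.
  intros Hr Hi Hx eps Heps.
  pose proof (moment_nonneg cr Hr (S (S n))). pose proof (moment_nonneg ci Hi (S (S n))).
  set (K := moment cr (S (S n)) + moment ci (S (S n))).
  assert (HK : 0 <= K) by (unfold K; lra).
  exists (eps / (K + 1)). split; [apply Rdiv_lt_0_compat; lra|].
  intros h Hh Hxh Hd.
  eapply Rle_lt_trans; [apply Cnorm_le_Rabs_add|].
  unfold series_tower, dseries01, Csub, Re, Im; simpl. rewrite !clamp01_id by auto.
  pose proof (dseries_diff_quotient cr Hr n x h Hh Hx Hxh).
  pose proof (dseries_diff_quotient ci Hi n x h Hh Hx Hxh).
  apply Rle_lt_trans with (Rabs h * K); [unfold K; lra|].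
  apply Rle_lt_trans with (eps / (K + 1) * K); [apply Rmult_le_compat_r; lra|].
  apply (Rmult_lt_reg_r (K + 1)); [lra|].
  replace (eps / (K + 1) * K * (K + 1)) with (eps * K) by (field; lra). nra.
Qed.

(** * Moment bounds from stretched-exponential decay *)

Lemma exp_ge_pow_div_fact y n : 0 <= y -> y ^ n / INR (fact n) <= exp y.
Proof.
  intros Hy. pose proof (exp_ge_taylor y n Hy) as Ht. destruct n as [|n]; [simpl in *; lra|].
  rewrite tech5 in Ht.
  assert (0 <= sum_f_R0 (fun k => y ^ k / INR (fact k)) n); [|lra].
  apply cond_pos_sum. intros k. apply Rdiv_le_0_compat; [now apply pow_le | apply INR_fact_lt_0].
Qed.

Definition tri_weight (k : nat) : R :=
  match k with O => 0 | S _ => / (INR k * (INR k + 1)) end.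

Lemma is_series_tri_weight : is_series tri_weight 1.
Proof.
  apply is_series_Reals. intros eps Heps.
  assert (Hpartial : forall N, sum_f_R0 tri_weight N = 1 - / (INR N + 1)).
  { induction N as [|N IH]; [simpl; field|].
    rewrite tech5, IH. unfold tri_weight. pose proof (pos_INR N). rewrite S_INR. field. lra. }
  destruct (archimed (/ eps)) as [Harch _].
  assert (0 < / eps) by now apply Rinv_0_lt_compat.
  exists (Z.to_nat (up (/ eps))). intros n Hn. unfold R_dist. rewrite Hpartial.
  pose proof (pos_INR n) as Hn0.
  replace (1 - / (INR n + 1) - 1) with (- / (INR n + 1)) by ring.
  rewrite Rabs_Ropp, Rabs_pos_eq by (left; apply Rinv_0_lt_compat; lra).
  assert (Hup : INR (Z.to_nat (up (/ eps))) <= INR n) by (apply le_INR; lia).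
  rewrite INR_IZR_INZ, Z2Nat.id in Hup by (apply le_IZR; lra).
  apply (Rmult_lt_reg_r (INR n + 1)); [lra|].
  rewrite Rinv_l by lra. replace 1 with (eps * / eps) by (field; lra). nra.
Qed.

Definition gevrey (G ga : R) (m : nat) : R := G * INR (fact (2 * m)) / ga ^ (2 * m).

(* [exp (ep sqrt x) >= (ep sqrt x)^4 / 4!] gives the factor [x^2], and
   [exp (ga sqrt x) >= (ga sqrt x)^(2m) / (2m)!] the factor [x^m]. *)
Lemma pow_bound_of_exp_sqrt_decay (A M x al ep ga : R) m :
  0 < ep -> 0 < ga -> 2 * al = ep + ga -> 0 <= A -> 0 <= x ->
  A * exp (2 * al * sqrt x) <= M ->
  A * x ^ m * x ^ 2 <= 24 * M * INR (fact (2 * m)) / (ep ^ 4 * ga ^ (2 * m)).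
Proof.
  intros Hep Hga Hal HA Hx HM.
  set (t := sqrt x) in HM. assert (Ht2 : t * t = x) by now apply sqrt_sqrt.
  assert (Ht : 0 <= t) by apply sqrt_pos.
  replace (2 * al * t) with (ep * t + ga * t) in HM by (rewrite <- Rmult_plus_distr_r, <- Hal; ring).
  rewrite exp_plus in HM.
  pose proof (exp_ge_pow_div_fact (ep * t) 4 ltac:(nra)) as E1.
  pose proof (exp_ge_pow_div_fact (ga * t) (2 * m) ltac:(nra)) as E2.
  replace (INR (fact 4)) with 24 in E1 by (simpl; lra).
  replace ((ep * t) ^ 4) with (ep ^ 4 * x ^ 2) in E1 by (rewrite <- Ht2; ring).
  replace ((ga * t) ^ (2 * m)) with (ga ^ (2 * m) * x ^ m) in E2
    by (rewrite Rpow_mult_distr, (pow_mult t), <- Ht2; f_equal; f_equal; ring).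
  set (Fm := INR (fact (2 * m))) in *. assert (HF : 0 < Fm) by apply INR_fact_lt_0.
  assert (Hep4 : 0 < ep ^ 4) by (apply pow_lt; lra).
  assert (Hga4 : 0 < ga ^ (2 * m)) by (apply pow_lt; lra).
  assert (0 <= x ^ m) by now apply pow_le. assert (0 <= x ^ 2) by now apply pow_le.
  assert (Hprod : A * (ep ^ 4 * x ^ 2 / 24) * (ga ^ (2 * m) * x ^ m / Fm) <= M).
  { eapply Rle_trans; [|exact HM]. rewrite Rmult_assoc. apply Rmult_le_compat_l; auto.
    apply Rmult_le_compat; auto; apply Rdiv_le_0_compat; nra. }
  apply (Rmult_le_reg_r (ep ^ 4 * ga ^ (2 * m) / (24 * Fm))); [apply Rdiv_lt_0_compat; nra|].
  replace (24 * M * Fm / (ep ^ 4 * ga ^ (2 * m)) * (ep ^ 4 * ga ^ (2 * m) / (24 * Fm)))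
    with M by (field; lra).
  eapply Rle_trans; [|exact Hprod]. right. field. lra.
Qed.

Lemma moment_term_le_of_decay (c : nat -> R) (M al ep ga : R) :
  0 < ep -> 0 < ga -> 2 * al = ep + ga -> c O = 0 ->
  (forall k, (1 <= k)%nat -> Rabs (c k) * exp (2 * al * sqrt (INR k)) <= M) ->
  forall m k, Rabs (c k) * INR k ^ m <= gevrey (48 * M / ep ^ 4) ga m * tri_weight k.
Proof.
  intros Hep Hga Hal Hc0 HM m k. destruct k as [|j].
  - rewrite Hc0, Rabs_R0. unfold tri_weight. lra.
  - set (x := INR (S j)). assert (Hx : 1 <= x) by (unfold x; rewrite S_INR; pose proof (pos_INR j); lra).
    set (A := Rabs (c (S j))). assert (HA : 0 <= A) by apply Rabs_pos.
    pose proof (pow_bound_of_exp_sqrt_decay A M x al ep ga m Hep Hga Hal HA ltac:(lra)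
                  (HM (S j) ltac:(lia))) as Hkey.
    set (R0 := 24 * M * INR (fact (2 * m)) / (ep ^ 4 * ga ^ (2 * m))) in Hkey.
    assert (0 <= A * x ^ m) by (apply Rmult_le_pos; [lra | apply pow_le; lra]).
    assert (0 <= R0) by (eapply Rle_trans; [|exact Hkey]; apply Rmult_le_pos; [lra | apply pow_le; lra]).
    replace (gevrey (48 * M / ep ^ 4) ga m * tri_weight (S j)) with (2 * R0 / (x * (x + 1))).
    2: { unfold gevrey, tri_weight, R0. fold x. field.
         repeat split; try lra; apply pow_nonzero; lra. }
    (* [1 / x^2 <= 2 / (x (x + 1))] for [x >= 1] *)
    apply (Rmult_le_reg_r (x ^ 2)); [nra|].
    eapply Rle_trans; [exact Hkey|].
    replace (2 * R0 / (x * (x + 1)) * x ^ 2) with (R0 * (2 * x / (x + 1))) by (field; lra).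
    rewrite <- (Rmult_1_r R0) at 1. apply Rmult_le_compat_l; [lra|].
    apply (Rmult_le_reg_r (x + 1)); [lra|]. unfold Rdiv. rewrite Rmult_assoc, Rinv_l by lra. lra.
Qed.

Section WeightedBound.

Variables (c : nat -> R) (K : nat -> R).
Hypothesis HK : forall m k, Rabs (c k) * INR k ^ m <= K m * tri_weight k.

Lemma moments_finite_of_weighted_bound : moments_finite c.
Proof.
  intros m. apply (ex_series_Rabs_le _ (fun k => K m * tri_weight k)).
  - intros k. rewrite Rabs_pos_eq; [apply HK|].
    apply Rmult_le_pos; [apply Rabs_pos | apply pow_le, pos_INR].
  - apply (ex_series_scal_l (K m) tri_weight). exists 1. apply is_series_tri_weight.
Qed.

Lemma moment_le_of_weighted_bound m : moment c m <= K m.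
Proof.
  unfold moment. rewrite <- (Rmult_1_r (K m)), <- (is_series_unique _ _ is_series_tri_weight).
  rewrite <- Series_scal_l. apply Series_le.
  - intros k. split; [apply Rmult_le_pos; [apply Rabs_pos | apply pow_le, pos_INR] | apply HK].
  - apply (ex_series_scal_l (K m) tri_weight). exists 1. apply is_series_tri_weight.
Qed.

End WeightedBound.

Definition gevrey_moments (c : nat -> R) (G ga : R) : Prop :=
  moments_finite c /\ forall m, moment c m <= gevrey G ga m.

Lemma decay_moments (c : nat -> R) (M al ep ga : R) :
  0 < ep -> 0 < ga -> 2 * al = ep + ga -> c O = 0 ->
  (forall k, (1 <= k)%nat -> Rabs (c k) * exp (2 * al * sqrt (INR k)) <= M) ->
  gevrey_moments c (48 * M / ep ^ 4) ga.
Proof.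
  intros Hep Hga Hal Hc0 HM.
  pose proof (moment_term_le_of_decay c M al ep ga Hep Hga Hal Hc0 HM) as HK.
  split; [exact (moments_finite_of_weighted_bound c _ HK) | exact (moment_le_of_weighted_bound c _ HK)].
Qed.

(** * Convergence of the weighted sums *)

Lemma fact_double_le m : INR (fact (2 * m)) <= INR (fact m) ^ 2 * 4 ^ m.
Proof.
  induction m as [|m IH]; [simpl; lra|].
  replace (2 * S m)%nat with (S (S (2 * m))) by lia.
  rewrite !fact_simpl, !mult_INR.
  pose proof (INR_fact_lt_0 (2 * m)).
  assert (INR (S (S (2 * m))) * INR (S (2 * m)) <= 4 * INR (S m) ^ 2).
  { rewrite !S_INR, mult_INR. pose proof (pos_INR m). simpl. nra. }
  replace ((INR (S m) * INR (fact m)) ^ 2 * 4 ^ S m)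
    with ((4 * INR (S m) ^ 2) * (INR (fact m) ^ 2 * 4 ^ m)) by (simpl; ring).
  rewrite <- Rmult_assoc. apply Rmult_le_compat; auto.
  apply Rmult_le_pos; apply pos_INR. lra.
Qed.

Lemma pow_double x n : x ^ (2 * n) = (x ^ n) ^ 2.
Proof. rewrite <- pow_mult. f_equal. lia. Qed.

Lemma wcoef_nonneg sg n : 0 <= sg -> 0 <= wcoef sg n.
Proof.
  intros Hs. unfold wcoef. apply Rdiv_le_0_compat; [now apply pow_le|].
  apply Rmult_lt_0_compat; apply pow_lt, INR_fact_lt_0.
Qed.

Lemma gevrey_weighted_le sg ga G j n : 0 < sg -> 0 < ga ->
  wcoef sg n * INR n ^ j * gevrey G ga (S n) ^ 2
    <= 16 * G ^ 2 / ga ^ 4 * (INR (S n) ^ (j + 2) * (16 * sg ^ 2 / ga ^ 4) ^ n).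
Proof.
  intros Hs Hg.
  set (a := INR (fact n)). set (b := INR (fact (S n))).
  assert (Hb : b = INR (S n) * a) by (unfold a, b; rewrite fact_simpl, mult_INR; auto).
  assert (Ha : 0 < a) by apply INR_fact_lt_0.
  assert (HSn : 0 < INR (S n)) by (apply lt_0_INR; lia).
  assert (HF : 0 <= INR (fact (2 * S n)) <= b ^ 2 * 4 ^ S n)
    by (split; [apply pos_INR | apply fact_double_le]).
  assert (Hj : 0 <= INR n ^ j <= INR (S n) ^ j)
    by (split; [apply pow_le, pos_INR | apply pow_incr; split; [apply pos_INR | apply le_INR; lia]]).
  assert (Hgev : gevrey G ga (S n) ^ 2 <= (G / ga ^ (2 * S n)) ^ 2 * (b ^ 2 * 4 ^ S n) ^ 2).
  { replace (gevrey G ga (S n) ^ 2) with ((G / ga ^ (2 * S n)) ^ 2 * INR (fact (2 * S n)) ^ 2)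
      by (unfold gevrey; field; apply pow_nonzero; lra).
    apply Rmult_le_compat_l; [apply pow2_ge_0 | apply pow_incr; exact HF]. }
  apply Rle_trans with (wcoef sg n * INR (S n) ^ j * ((G / ga ^ (2 * S n)) ^ 2 * (b ^ 2 * 4 ^ S n) ^ 2)).
  - pose proof (wcoef_nonneg sg n ltac:(lra)).
    apply Rmult_le_compat; [| apply pow2_ge_0 | apply Rmult_le_compat_l; tauto | exact Hgev].
    apply Rmult_le_pos; tauto.
  - right. unfold wcoef. fold a b. rewrite Hb.
    assert (Hq : (16 * sg ^ 2 / ga ^ 4) ^ n = (4 ^ n * sg ^ n) ^ 2 / ((ga ^ n) ^ 2) ^ 2).
    { replace (16 * sg ^ 2 / ga ^ 4) with ((4 * sg / ga ^ 2) ^ 2) by (field; lra).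
      rewrite <- pow_double, pow_mult, Rdiv_def, !Rpow_mult_distr, pow_inv.
      rewrite pow_inv, <- !pow_mult, Rdiv_def.
      replace (n * 2)%nat with (2 * n)%nat by lia.
      replace (n * (2 * 2))%nat with (2 * (2 * n))%nat by lia. reflexivity. }
    rewrite Hq, pow_add, !pow_double. simpl (ga ^ S n). simpl (4 ^ S n).
    assert (0 < ga ^ n) by (apply pow_lt; lra).
    set (X := sg ^ n) in *. set (Y := ga ^ n) in *. set (Z := 4 ^ n) in *.
    field. repeat split; lra.
Qed.

Lemma exp_mult_INR d n : exp (d * INR n) = exp d ^ n.
Proof.
  induction n as [|n IH]; [simpl; now rewrite Rmult_0_r, exp_0|].
  rewrite S_INR, Rmult_plus_distr_l, Rmult_1_r, exp_plus, IH. simpl. ring.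
Qed.

(* Choosing [d] with [exp d * rho < 1], the polynomial factor is dominated by
   [exp (d (n + 1)) = exp d * (exp d) ^ n]. *)
Lemma ex_series_pow_geom p rho : 0 < rho < 1 ->
  ex_series (fun n => INR (S n) ^ p * rho ^ n).
Proof.
  intros Hrho.
  assert (Hln : ln rho < 0) by (rewrite <- ln_1; apply ln_increasing; lra).
  set (d := - ln rho / 2). assert (Hd : 0 < d) by (unfold d; lra).
  set (q := exp d * rho).
  assert (Hq : 0 < q < 1).
  { unfold q. split; [apply Rmult_lt_0_compat; [apply exp_pos | lra]|].
    rewrite <- (exp_ln rho), <- exp_plus, <- exp_0 by lra. apply exp_increasing. unfold d. lra. }
  set (C := INR (fact p) / d ^ p * exp d).
  apply (ex_series_Rabs_le _ (fun n => C * q ^ n)).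
  - intros n. rewrite Rabs_pos_eq by (apply Rmult_le_pos; apply pow_le; [apply pos_INR | lra]).
    unfold C, q. rewrite Rpow_mult_distr, <- Rmult_assoc.
    apply Rmult_le_compat_r; [apply pow_le; lra|].
    pose proof (exp_ge_pow_div_fact (d * INR (S n)) p ltac:(pose proof (pos_INR (S n)); nra)) as E.
    rewrite Rpow_mult_distr, S_INR, Rmult_plus_distr_l, Rmult_1_r, exp_plus in E.
    rewrite exp_mult_INR in E.
    assert (0 < d ^ p) by (apply pow_lt; lra). pose proof (INR_fact_lt_0 p).
    rewrite S_INR. apply (Rmult_le_reg_l (d ^ p / INR (fact p))); [apply Rdiv_lt_0_compat; lra|].
    replace (d ^ p / INR (fact p) * (INR (fact p) / d ^ p * exp d * exp d ^ n))
      with (exp d * exp d ^ n) by (field; lra).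
    replace (d ^ p / INR (fact p) * (INR n + 1) ^ p) with (d ^ p * (INR n + 1) ^ p / INR (fact p))
      by (field; lra).
    rewrite (Rmult_comm (exp d)). exact E.
  - apply (ex_series_scal_l C (fun n => q ^ n)). apply ex_series_geom. rewrite Rabs_pos_eq; lra.
Qed.

Lemma ex_series_gevrey_weighted sg ga G j : 0 < sg -> 0 < ga -> 4 * sg < ga ^ 2 ->
  ex_series (fun n => wcoef sg n * INR n ^ j * gevrey G ga (S n) ^ 2).
Proof.
  intros Hs Hg Hsg. set (rho := 16 * sg ^ 2 / ga ^ 4).
  assert (Hrho : 0 < rho < 1).
  { unfold rho. assert (0 < ga ^ 4) by (apply pow_lt; lra). split.
    - apply Rdiv_lt_0_compat; nra.
    - apply (Rmult_lt_reg_r (ga ^ 4)); [lra|].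
      unfold Rdiv. rewrite Rmult_assoc, Rinv_l by lra.
      replace (ga ^ 4) with (ga ^ 2 * ga ^ 2) by ring. nra. }
  apply (ex_series_Rabs_le _ (fun n => 16 * G ^ 2 / ga ^ 4 * (INR (S n) ^ (j + 2) * rho ^ n))).
  - intros n. rewrite Rabs_pos_eq; [now apply gevrey_weighted_le|].
    apply Rmult_le_pos; [|apply pow2_ge_0].
    apply Rmult_le_pos; [apply wcoef_nonneg; lra | apply pow_le, pos_INR].
  - apply (ex_series_scal_l (16 * G ^ 2 / ga ^ 4) (fun n => INR (S n) ^ (j + 2) * rho ^ n)).
    now apply ex_series_pow_geom.
Qed.

Lemma sum_f_R0_le_Series (a : nat -> R) N :
  (forall n, 0 <= a n) -> ex_series a -> sum_f_R0 a N <= Series a.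
Proof.
  intros Ha Hex. rewrite (Series_incr_n a (S N)) by (lia || exact Hex). simpl pred.
  assert (0 <= Series (fun k => a (S N + k)%nat)); [|lra].
  apply (Rle_trans _ (Rabs (Series (fun k => a (S N + k)%nat)))); [apply Rabs_pos|].
  apply Rabs_Series_le; [intros k; rewrite Rabs_pos_eq; auto; lra|].
  now apply (ex_series_incr_n a (S N)).
Qed.

Lemma continuity_pt_pow f x k : continuity_pt f x -> continuity_pt (fun y => f y ^ k) x.
Proof.
  intros Hf. induction k as [|k IH]; simpl.
  - now apply continuity_pt_const.
  - exact (continuity_pt_mult f (fun y => f y ^ k) x Hf IH).
Qed.

Section SeriesTowerNorms.

Variables (cr ci : nat -> R) (sigma : R) (B : nat -> R).
Hypotheses (Hr : moments_finite cr) (Hi : moments_finite ci) (Hsigma : 0 < sigma).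
Hypotheses (Br : forall m, moment cr m <= B m) (Bi : forall m, moment ci m <= B m).

Let tower := series_tower cr ci.

Lemma Cnorm2_series_tower_le n x : 0 <= x <= 1 -> Cnorm2 (tower n x) <= 2 * B n ^ 2.
Proof.
  intros Hx. unfold tower, series_tower, dseries01, Cnorm2, Re, Im; simpl.
  rewrite clamp01_id by exact Hx.
  assert (Hsq : forall c, moments_finite c -> (forall m, moment c m <= B m) ->
            dseries c n x ^ 2 <= B n ^ 2).
  { intros c Hc Bc. rewrite <- pow2_abs. apply pow_incr. split; [apply Rabs_pos|].
    eapply Rle_trans; [now apply dseries_bound | apply Bc]. }
  pose proof (Hsq cr Hr Br). pose proof (Hsq ci Hi Bi). simpl in *. lra.
Qed.

Lemma weighted_integrand_continuous j n x :
  continuity_pt (fun y => (y / sigma) ^ j * Cnorm2 (tower n y)) x.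
Proof.
  apply (continuity_pt_mult (fun y => (y / sigma) ^ j) (fun y => Cnorm2 (tower n y))).
  - apply continuity_pt_pow, (continuity_pt_lipschitz _ (/ sigma)).
    + left; now apply Rinv_0_lt_compat.
    + intros a b. replace (b / sigma - a / sigma) with (/ sigma * (b - a)) by (field; lra).
      rewrite Rabs_mult, (Rabs_pos_eq (/ sigma)) by (left; now apply Rinv_0_lt_compat). lra.
  - exact (continuity_pt_plus (fun y => dseries01 cr n y ^ 2) (fun y => dseries01 ci n y ^ 2) x
             (continuity_pt_pow _ _ 2 (dseries01_continuous cr n x Hr))
             (continuity_pt_pow _ _ 2 (dseries01_continuous ci n x Hi))).
Qed.

Lemma weighted_term_nonneg j n : 0 <= wcoef sigma n * INR n ^ j * B (S n) ^ 2.
Proof.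
  apply Rmult_le_pos; [|apply pow2_ge_0].
  apply Rmult_le_pos; [apply wcoef_nonneg; lra | apply pow_le, pos_INR].
Qed.

Lemma weighted_integral_le j n
  (pr : Riemann_integrable (fun y => (y / sigma) ^ j * Cnorm2 (tower n y)) 0 1) :
  RiemannInt pr <= 2 * (/ sigma) ^ j * B n ^ 2.
Proof.
  replace (2 * (/ sigma) ^ j * B n ^ 2)
    with (RiemannInt (RiemannInt_P14 0 1 (2 * (/ sigma) ^ j * B n ^ 2))) by (rewrite RiemannInt_P15; ring).
  apply RiemannInt_P19; [lra|]. intros x Hx. unfold fct_cte.
  pose proof (Cnorm2_series_tower_le n x ltac:(lra)). pose proof (Cnorm2_nonneg (tower n x)).
  assert (0 <= (x / sigma) ^ j <= (/ sigma) ^ j).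
  { split; [apply pow_le, Rdiv_le_0_compat; lra|]. apply pow_incr.
    split; [apply Rdiv_le_0_compat; lra|]. unfold Rdiv. rewrite <- (Rmult_1_l (/ sigma)) at 2.
    apply Rmult_le_compat_r; [left; now apply Rinv_0_lt_compat | lra]. }
  replace (2 * (/ sigma) ^ j * B n ^ 2) with ((/ sigma) ^ j * (2 * B n ^ 2)) by ring.
  apply Rmult_le_compat; lra.
Qed.

Lemma seminorm_finite_series_tower j :
  ex_series (fun n => wcoef sigma n * INR n ^ j * B (S n) ^ 2) ->
  seminorm_finite sigma j (fun n => tower (S n)).
Proof.
  intros Hex.
  assert (pr : forall n, Riemann_integrable (fun y => (y / sigma) ^ j * Cnorm2 (tower (S n) y)) 0 1).
  { intros n. apply continuity_implies_RiemannInt; [lra|]. intros x _.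
    apply weighted_integrand_continuous. }
  set (K := 2 * (/ sigma) ^ j).
  assert (HK : 0 <= K) by (apply Rmult_le_pos; [lra | apply pow_le; left; now apply Rinv_0_lt_compat]).
  exists (fun n => RiemannInt (pr n)), (K * Series (fun n => wcoef sigma n * INR n ^ j * B (S n) ^ 2)).
  split; [intros n; now exists (pr n)|].
  intros N.
  apply Rle_trans with (sum_f_R0 (fun n => wcoef sigma n * INR n ^ j * B (S n) ^ 2 * K) N).
  - apply sum_Rle. intros n _.
    replace (wcoef sigma n * INR n ^ j * B (S n) ^ 2 * K)
      with (wcoef sigma n * INR n ^ j * (K * B (S n) ^ 2)) by ring.
    apply Rmult_le_compat_l; [apply Rmult_le_pos; [apply wcoef_nonneg | apply pow_le, pos_INR]; lra|].
    apply weighted_integral_le.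
  - rewrite <- scal_sum. apply Rmult_le_compat_l; [exact HK|].
    apply sum_f_R0_le_Series; [apply weighted_term_nonneg | exact Hex].
Qed.

Lemma bdry_finite_series_tower :
  ex_series (fun n => wcoef sigma n * INR n ^ 0 * B (S n) ^ 2) ->
  bdry_finite sigma (fun n => tower (S n)).
Proof.
  intros Hex. exists (2 * sigma * Series (fun n => wcoef sigma n * INR n ^ 0 * B (S n) ^ 2)).
  intros N.
  apply Rle_trans with (sum_f_R0 (fun n => wcoef sigma n * INR n ^ 0 * B (S n) ^ 2 * (2 * sigma)) N).
  - apply sum_Rle. intros n _.
    pose proof (Cnorm2_series_tower_le (S n) 0 ltac:(lra)). pose proof (wcoef_nonneg sigma n ltac:(lra)).
    simpl (INR n ^ 0).
    replace (wcoef sigma n * 1 * B (S n) ^ 2 * (2 * sigma))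
      with (wcoef sigma n * sigma * (2 * B (S n) ^ 2)) by ring.
    apply Rmult_le_compat_l; [apply Rmult_le_pos|]; lra.
  - rewrite <- scal_sum. apply Rmult_le_compat_l; [lra|].
    apply sum_f_R0_le_Series; [apply weighted_term_nonneg | exact Hex].
Qed.

End SeriesTowerNorms.

(** * The equation up to the boundary *)

Lemma is_deriv01_unique f g x l1 l2 :
  (forall d, 0 < d -> exists h, h <> 0 /\ 0 <= x + h <= 1 /\ Rabs h < d /\ f (x + h) = g (x + h)) ->
  f x = g x -> is_deriv01 f x l1 -> is_deriv01 g x l2 -> l1 = l2.
Proof.
  intros Hnear Hx D1 D2.
  assert (Hclose : forall e, 0 < e -> Rabs (Re l1 - Re l2) < 2 * e /\ Rabs (Im l1 - Im l2) < 2 * e).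
  { intros e He. destruct (D1 e He) as [d1 [Hd1 P1]]. destruct (D2 e He) as [d2 [Hd2 P2]].
    destruct (Hnear (Rmin d1 d2) ltac:(now apply Rmin_pos)) as [h [Hh0 [Hxh [Hhd Hfg]]]].
    specialize (P1 h Hh0 Hxh ltac:(eapply Rlt_le_trans; [exact Hhd | apply Rmin_l])).
    specialize (P2 h Hh0 Hxh ltac:(eapply Rlt_le_trans; [exact Hhd | apply Rmin_r])).
    rewrite Hfg, Hx in P1.
    set (q := (/ h * Re (Csub (g (x + h)) (g x)), / h * Im (Csub (g (x + h)) (g x)))) in *.
    pose proof (Rabs_def2 _ _ (Rle_lt_trans _ _ _ (Rabs_Re_le_Cnorm (Csub q l1)) P1)) as Re1.
    pose proof (Rabs_def2 _ _ (Rle_lt_trans _ _ _ (Rabs_Re_le_Cnorm (Csub q l2)) P2)) as Re2.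
    pose proof (Rabs_def2 _ _ (Rle_lt_trans _ _ _ (Rabs_Im_le_Cnorm (Csub q l1)) P1)) as Im1.
    pose proof (Rabs_def2 _ _ (Rle_lt_trans _ _ _ (Rabs_Im_le_Cnorm (Csub q l2)) P2)) as Im2.
    unfold Csub, Re, Im in Re1, Re2, Im1, Im2 |- *; simpl in Re1, Re2, Im1, Im2.
    split; apply Rabs_def1; lra. }
  assert (Heq : forall a b, (forall e, 0 < e -> Rabs (a - b) < 2 * e) -> a = b).
  { intros a b Hab. destruct (Req_dec a b) as [|Hn]; [assumption|]. exfalso.
    assert (0 < Rabs (a - b)) by (apply Rabs_pos_lt; lra).
    specialize (Hab (Rabs (a - b) / 2) ltac:(lra)). lra. }
  destruct l1 as [a1 b1], l2 as [a2 b2].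
  f_equal; apply Heq; intros e He; apply (Hclose e He).
Qed.

Lemma continuity_pt_eq0_closed01 (phi : R -> R) x0 : 0 <= x0 <= 1 -> continuity_pt phi x0 ->
  (forall y, 0 < y < 1 -> phi y = 0) -> phi x0 = 0.
Proof.
  intros Hx0 Hc Hz. destruct (Req_dec (phi x0) 0) as [|Hn]; [assumption|]. exfalso.
  assert (He : 0 < Rabs (phi x0)) by now apply Rabs_pos_lt.
  destruct (Hc (Rabs (phi x0)) He) as [alp [Ha Hp]].
  (* a point of (0, 1) strictly between x0 and 1/2, within [alp] of x0 *)
  set (t := Rmin (1 / 2) (alp / 2)).
  assert (Ht : 0 < t <= 1 / 2 /\ t <= alp / 2)
    by (unfold t; repeat split; [apply Rmin_pos; lra | apply Rmin_l | apply Rmin_r]).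
  destruct (Req_dec x0 (1 / 2)) as [Hhalf|Hhalf]; [apply Hn, Hz; lra|].
  set (y := x0 + t * (1 / 2 - x0)).
  assert (Hy : 0 < y < 1) by (unfold y; split; nra).
  assert (Hyx : Rabs (y - x0) < alp).
  { unfold y. replace (x0 + t * (1 / 2 - x0) - x0) with (t * (1 / 2 - x0)) by ring.
    rewrite Rabs_mult, (Rabs_pos_eq t) by lra.
    assert (Rabs (1 / 2 - x0) <= 1 / 2) by (apply Rabs_le; lra). nra. }
  assert (Hneq : x0 <> y) by (unfold y; nra).
  specialize (Hp y (conj (conj I Hneq) Hyx)). simpl in Hp. unfold R_dist in Hp.
  rewrite Hz in Hp by exact Hy. rewrite Rminus_0_l, Rabs_Ropp in Hp. lra.
Qed.

Lemma exists_near_interior y d : 0 < y < 1 -> 0 < d ->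
  exists h, h <> 0 /\ 0 < y + h < 1 /\ Rabs h < d.
Proof.
  intros Hy Hd. exists (Rmin (d / 2) ((1 - y) / 2)).
  assert (0 < Rmin (d / 2) ((1 - y) / 2)) by (apply Rmin_pos; lra).
  pose proof (Rmin_l (d / 2) ((1 - y) / 2)). pose proof (Rmin_r (d / 2) ((1 - y) / 2)).
  repeat split; try lra. rewrite Rabs_pos_eq; lra.
Qed.

Lemma is_deriv01_interior_unique f g y l1 l2 : 0 < y < 1 ->
  (forall z, 0 < z < 1 -> f z = g z) -> is_deriv01 f y l1 -> is_deriv01 g y l2 -> l1 = l2.
Proof.
  intros Hy Hfg. apply is_deriv01_unique; [|now apply Hfg].
  intros d Hd. destruct (exists_near_interior y d Hy Hd) as [h [Hh [Hyh Hhd]]].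
  exists h. repeat split; try lra; auto.
Qed.

Definition Ccontinuity_pt (f : R -> Cpx) (x : R) : Prop :=
  continuity_pt (fun y => Re (f y)) x /\ continuity_pt (fun y => Im (f y)) x.

Section Ccontinuity.

Variable x : R.

Lemma Ccontinuity_pt_add f g : Ccontinuity_pt f x -> Ccontinuity_pt g x ->
  Ccontinuity_pt (fun y => Cadd (f y) (g y)) x.
Proof.
  intros [F1 F2] [G1 G2]. split.
  - exact (continuity_pt_plus _ _ x F1 G1).
  - exact (continuity_pt_plus _ _ x F2 G2).
Qed.

Lemma Ccontinuity_pt_sub f g : Ccontinuity_pt f x -> Ccontinuity_pt g x ->
  Ccontinuity_pt (fun y => Csub (f y) (g y)) x.
Proof.
  intros [F1 F2] [G1 G2]. split.
  - exact (continuity_pt_minus _ _ x F1 G1).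
  - exact (continuity_pt_minus _ _ x F2 G2).
Qed.

Lemma Ccontinuity_pt_mul f g : Ccontinuity_pt f x -> Ccontinuity_pt g x ->
  Ccontinuity_pt (fun y => Cmul (f y) (g y)) x.
Proof.
  intros [F1 F2] [G1 G2]. split.
  - exact (continuity_pt_minus _ _ x (continuity_pt_mult _ _ x F1 G1) (continuity_pt_mult _ _ x F2 G2)).
  - exact (continuity_pt_plus _ _ x (continuity_pt_mult _ _ x F1 G2) (continuity_pt_mult _ _ x F2 G1)).
Qed.

Lemma Ccontinuity_pt_const (a : Cpx) : Ccontinuity_pt (fun _ => a) x.
Proof. split; now apply continuity_pt_const. Qed.

Lemma Ccontinuity_pt_RtoC f : continuity_pt f x -> Ccontinuity_pt (fun y => RtoC (f y)) x.
Proof. intros Hf. split; [exact Hf | now apply continuity_pt_const]. Qed.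

Lemma Ccontinuity_pt_Peval W : Ccontinuity_pt (Peval W) x.
Proof.
  induction W as [|a W IH]; simpl; [apply Ccontinuity_pt_const|].
  apply Ccontinuity_pt_add; [apply Ccontinuity_pt_const|].
  apply Ccontinuity_pt_mul; [apply Ccontinuity_pt_RtoC, continuity_pt_id | exact IH].
Qed.

Lemma Ccontinuity_pt_Lop s W D : (forall n, Ccontinuity_pt (D n) x) ->
  Ccontinuity_pt (Lop s W D) x.
Proof.
  intros HD. unfold Lop. apply Ccontinuity_pt_sub.
  - apply Ccontinuity_pt_add; apply Ccontinuity_pt_mul; auto.
    + apply Ccontinuity_pt_RtoC, continuity_pt_pow, continuity_pt_id.
    + apply Ccontinuity_pt_add; [|apply Ccontinuity_pt_const].
      apply Ccontinuity_pt_RtoC, continuity_pt_scal, continuity_pt_id.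
  - apply Ccontinuity_pt_mul; auto. apply Ccontinuity_pt_Peval.
Qed.

End Ccontinuity.

Lemma series_tower_continuous cr ci n x : moments_finite cr -> moments_finite ci ->
  Ccontinuity_pt (series_tower cr ci n) x.
Proof. intros Hr Hi. split; now apply dseries01_continuous. Qed.

Lemma Lop_zero_of_smooth_tower s W u D : solves_ODE s W u -> smooth_tower u D ->
  (forall n x, Ccontinuity_pt (D n) x) -> forall x, 0 <= x <= 1 -> Lop s W D x = C0.
Proof.
  intros [u1 [u2 Hode]] [HD0 HD] Hcont.
  assert (E1 : forall y, 0 < y < 1 -> u1 y = D 1%nat y).
  { intros y Hy. apply (is_deriv01_interior_unique u (D O) y); auto.
    - intros z Hz. symmetry. apply HD0. lra.
    - apply (Hode y Hy).
    - apply HD. lra. }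
  assert (E2 : forall y, 0 < y < 1 -> u2 y = D 2%nat y).
  { intros y Hy. apply (is_deriv01_interior_unique u1 (D 1%nat) y); auto.
    - apply (Hode y Hy).
    - apply HD. lra. }
  assert (Hint : forall y, 0 < y < 1 -> Lop s W D y = C0).
  { intros y Hy. destruct (Hode y Hy) as [_ [_ Hz]]. unfold Lop.
    rewrite <- E1, <- E2, HD0 by lra. exact Hz. }
  intros x Hx. destruct (Ccontinuity_pt_Lop x s W D (fun n => Hcont n x)) as [Cr Ci].
  assert (Zr : Re (Lop s W D x) = 0)
    by (apply (continuity_pt_eq0_closed01 (fun y => Re (Lop s W D y))); auto;
        intros y Hy; now rewrite Hint).
  assert (Zi : Im (Lop s W D x) = 0)
    by (apply (continuity_pt_eq0_closed01 (fun y => Im (Lop s W D y))); auto;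
        intros y Hy; now rewrite Hint).
  destruct (Lop s W D x) as [a b]. unfold Re, Im in *; simpl in *. now subst.
Qed.

Lemma InY_of_zero_on01 sigma v : (forall x, 0 <= x <= 1 -> v x = C0) -> InY sigma v.
Proof.
  intros Hv.
  assert (Hzero : forall k, seminorm_finite sigma k (fun _ _ => C0)).
  { intros k. exists (fun _ => 0), 0. split.
    - intros n. replace (fun x => (x / sigma) ^ k * Cnorm2 C0) with (fct_cte 0).
      + exists (RiemannInt_P14 0 1 0). rewrite RiemannInt_P15. ring.
      + apply functional_extensionality. intros x. unfold fct_cte, Cnorm2, C0, Re, Im; simpl. ring.
    - intros N. rewrite (sum_eq _ (fun _ => 0)), sum_cte by (intros; ring). lra. }
  exists (fun _ _ => C0). repeat split; try apply Hzero.
  - intros x Hx. symmetry. now apply Hv.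
  - intros n x _ eps Heps. exists 1. split; [lra|]. intros h _ _ _.
    unfold Cnorm, Cnorm2, Csub, C0, Re, Im; simpl.
    replace (/ h * (0 - 0) - 0) with 0 by ring. rewrite Rmult_0_l, Rplus_0_l, sqrt_0. exact Heps.
  - exists 0. intros N.
    rewrite (sum_eq _ (fun _ => 0)), sum_cte by (intros; unfold Cnorm2, C0, Re, Im; simpl; ring). lra.
Qed.

(** * Leaver's solution *)

Lemma infinite_sum_zero_unique (a : nat -> R) l : (forall k, a k = 0) -> infinite_sum a l -> l = 0.
Proof.
  intros Ha Hs. apply (uniqueness_sum a); [exact Hs|].
  intros eps Heps. exists O. intros n _. unfold R_dist.
  replace (sum_f_R0 a n) with 0; [rewrite Rminus_0_r, Rabs_R0; exact Heps|].
  induction n as [|n IH]; simpl; rewrite ?Ha, <- ?IH; ring.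
Qed.

Lemma infinite_sum_ext (a b : nat -> R) l :
  (forall n, a n = b n) -> infinite_sum a l -> infinite_sum b l.
Proof.
  intros Hab Hs eps Heps. destruct (Hs eps Heps) as [N HN]. exists N. intros n Hn.
  rewrite <- (sum_eq a b n) by auto. now apply HN.
Qed.

(* [H 0] is not part of Leaver's expansion, so it is replaced by 0. *)
Definition coef_re (H : nat -> Cpx) (k : nat) : R := match k with O => 0 | S _ => Re (H k) end.
Definition coef_im (H : nat -> Cpx) (k : nat) : R := match k with O => 0 | S _ => Im (H k) end.

Lemma Leaver_coef_decay s H M k : (1 <= k)%nat ->
  Cnorm (Cmul (H k) (Cexp (Cmul (RtoC 2) (Csqrt (Cmul s (RtoC (INR k))))))) <= M ->
  Cnorm (H k) * exp (2 * Re (Csqrt s) * sqrt (INR k)) <= M.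
Proof.
  intros _ Hb. rewrite Cnorm_Cmul, Cnorm_Cexp in Hb.
  replace (2 * Re (Csqrt s) * sqrt (INR k)) with (Re (Cmul (RtoC 2) (Csqrt (Cmul s (RtoC (INR k)))))).
  - exact Hb.
  - unfold Cmul at 1. rewrite Re_Csqrt_scale by apply pos_INR. unfold RtoC, Re, Im; simpl. ring.
Qed.

Lemma Leaver_series_tower_eq s W u H : Leaver_qnf s W u H ->
  forall x, 0 <= x <= 1 -> series_tower (coef_re H) (coef_im H) 0 x = u x.
Proof.
  intros [_ [_ [_ [Hser _]]]] x Hx. destruct (Hser x Hx) as [Hre Him].
  unfold series_tower, dseries01. rewrite clamp01_id by exact Hx.
  rewrite (dseries0_eq _ (Re (u x))), (dseries0_eq _ (Im (u x))); try reflexivity.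
  - now destruct (u x).
  - revert Him. apply infinite_sum_ext. intros j. unfold Cmul, RtoC, coef_im, Re, Im; simpl. ring.
  - revert Hre. apply infinite_sum_ext. intros j. unfold Cmul, RtoC, coef_re, Re, Im; simpl. ring.
Qed.

Lemma Leaver_vanishes_at_1 s W u H : Leaver_qnf s W u H -> u 1 = C0.
Proof.
  intros [_ [_ [_ [Hser _]]]]. destruct (Hser 1 ltac:(lra)) as [Hre Him].
  replace (1 - 1) with 0 in Hre, Him by ring.
  apply infinite_sum_zero_unique in Hre; [|intros k; unfold Cmul, RtoC, Re, Im; simpl; ring].
  apply infinite_sum_zero_unique in Him; [|intros k; unfold Cmul, RtoC, Re, Im; simpl; ring].
  unfold C0. destruct (u 1). unfold Re, Im in *; simpl in *. now subst.
Qed.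

Lemma Leaver_gevrey_moments s W u H ep ga : Leaver_qnf s W u H ->
  0 < ep -> 0 < ga -> 2 * Re (Csqrt s) = ep + ga ->
  exists G, gevrey_moments (coef_re H) G ga /\ gevrey_moments (coef_im H) G ga.
Proof.
  intros [_ [_ [_ [_ [M HM]]]]] Hep Hga Hsplit. exists (48 * M / ep ^ 4).
  assert (Hmom : forall c, c O = 0 -> (forall k, (1 <= k)%nat -> Rabs (c k) <= Cnorm (H k)) ->
            gevrey_moments c (48 * M / ep ^ 4) ga).
  { intros c Hc0 Hck. apply (decay_moments c M (Re (Csqrt s))); auto.
    intros k Hk. eapply Rle_trans; [|exact (Leaver_coef_decay s H M k Hk (HM k Hk))].
    apply Rmult_le_compat_r; [left; apply exp_pos | now apply Hck]. }
  split; apply Hmom; try reflexivity; intros [|k] Hk; try lia.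
  - apply Rabs_Re_le_Cnorm.
  - apply Rabs_Im_le_Cnorm.
Qed.

Lemma Leaver_series_tower_continuous s W u H : Leaver_qnf s W u H -> 0 < Re (Csqrt s) ->
  forall n x, Ccontinuity_pt (series_tower (coef_re H) (coef_im H) n) x.
Proof.
  intros Hq Hal n x.
  destruct (Leaver_gevrey_moments s W u H (Re (Csqrt s)) (Re (Csqrt s)) Hq Hal Hal ltac:(ring))
    as [G [[Hr _] [Hi _]]].
  now apply series_tower_continuous.
Qed.

(* Splitting [2 Re (sqrt s) = ep + ga] with [ga = Re (sqrt s) + sqrt sigma] gives
   [ga ^ 2 > 4 sigma], the condition for the weighted Gevrey sums to converge. *)
Lemma Leaver_InX_tower W sigma s u H : 0 < sigma -> Leaver_qnf s W u H ->
  sigma < Re (Csqrt s) ^ 2 -> InX_tower sigma u (series_tower (coef_re H) (coef_im H)).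
Proof.
  intros Hs Hq Hsig. set (al := Re (Csqrt s)) in *.
  pose proof (Re_Csqrt_nonneg s) as Hal0. fold al in Hal0.
  assert (Hsq : 0 < sqrt sigma) by now apply sqrt_lt_R0.
  assert (Hsq2 : sqrt sigma * sqrt sigma = sigma) by (apply sqrt_sqrt; lra).
  assert (Hal : sqrt sigma < al) by (rewrite <- (sqrt_pow2 al Hal0); apply sqrt_lt_1_alt; lra).
  set (ga := al + sqrt sigma).
  assert (Hga4 : 4 * sigma < ga ^ 2) by (unfold ga; nra).
  destruct (Leaver_gevrey_moments s W u H (al - sqrt sigma) ga Hq ltac:(lra) ltac:(unfold ga; lra)
              ltac:(unfold ga; fold al; ring)) as [G [[Hr Br] [Hi Bi]]].
  pose proof (fun j => ex_series_gevrey_weighted sigma ga G j Hs ltac:(unfold ga; lra) Hga4) as Hsum.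
  repeat split.
  - now apply (Leaver_series_tower_eq s W u H).
  - intros n x Hx. now apply series_tower_deriv.
  - now apply (Leaver_vanishes_at_1 s W u H).
  - now apply (seminorm_finite_series_tower _ _ _ _ Hr Hi Hs Br Bi).
  - now apply (seminorm_finite_series_tower _ _ _ _ Hr Hi Hs Br Bi).
  - now apply (seminorm_finite_series_tower _ _ _ _ Hr Hi Hs Br Bi).
  - now apply (bdry_finite_series_tower _ _ _ _ Hr Hi Hs Br Bi).
Qed.

Theorem mainTheorem18 :
  forall (W : list Cpx) (sigma : R) (s : Cpx) (u : R -> Cpx) (H : nat -> Cpx),
    0 < sigma ->
    Leaver_qnf s W u H ->
    sigma < (Re (Csqrt s)) ^ 2 ->
    (exists x, 0 < x < 1 /\ u x <> C0) ->
    InX sigma u /\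
    (Omega sigma s ->
       exists D, InX_tower sigma u D /\ InY sigma (Lop s W D) /\
         (forall x, 0 <= x <= 1 -> Lop s W D x = C0) /\
         (exists x, 0 <= x <= 1 /\ u x <> C0)).
Proof.
  intros W sigma s u H Hs Hq Hsig [x [Hx Hux]].
  set (D := series_tower (coef_re H) (coef_im H)).
  assert (HX : InX_tower sigma u D) by now apply (Leaver_InX_tower W sigma s u H).
  split; [now exists D|].
  intros _. exists D.
  assert (Hal : 0 < Re (Csqrt s)) by (pose proof (Re_Csqrt_nonneg s); nra).
  assert (HL : forall y, 0 <= y <= 1 -> Lop s W D y = C0).
  { destruct HX as [Htower _]. pose proof Hq as [_ [_ [Hode _]]].
    apply (Lop_zero_of_smooth_tower s W u D Hode Htower).
    now apply (Leaver_series_tower_continuous s W u H). }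
  split; [exact HX|]. split; [exact (InY_of_zero_on01 sigma _ HL)|]. split; [exact HL|].
  exists x. split; [lra | exact Hux].
Qed.
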